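(* Let $\mathcal{F}:\mathcal{T}^Y\to\mathcal{T}^Z$ be a cover between trees of spheres, let $T''$ be a nonempty, open and connected subset of $T^Z$, and let $T'$ be a connected component of $F^{-1}(T'')$. Then the map $\overline{\mathcal{F}}:\overline{T'}\to\overline{T''}$ defined by $\overline{F}:=F|_{\overline{T'}}:\overline{T'}\to\overline{T''}$ and $\overline{f}_v:=f_v$ for every internal vertex $v$ of $\overline{T'}$ is a cover between trees of spheres, where $\overline{T'}$ (resp. $\overline{T''}$) is regarded as a tree of spheres marked by its set of leaves, with the spheres $\mathcal{S}_v$ and attaching maps $i_v$ of $\mathcal{T}^Y$ (resp. $\mathcal{T}^Z$) at its internal vertices.
   Context: Trees are finite connected graphs without cycles (vertex set $V$, edges $2$-element subsets of $V$, $E_v$ the set of edges containing $v$), regarded as the set $V\sqcup E$ with the topology whose closed sets are the sub-graphs (subsets containing both endpoints of each of their edges); $\overline{A}$ denotes closure. Leaves are vertices of valence $1$, the others internal vertices ($IV$). For $T''$ and $T'$ as in the claim, $\overline{T'}$ is a sub-tree of $T^Y$ whose internal vertices are exactly the internal vertices of $T^Y$ lying in $T'$, each having the same set of incident edges as in $T^Y$ (similarly for $\overline{T''}$ in $T^Z$), so the attaching maps $i_v$ make sense. A tree of spheres $\mathcal{T}^X$ marked by a finite set $X$ ($\ge3$ elements) consists of a tree $T^X$ whose leaf set is $X$ and, for each internal vertex $v$, a topological $2$-sphere $\mathcal{S}_v$ and an injection $i_v:E_v\to\mathcal{S}_v$; $X_v:=i_v(E_v)$. A cover $\mathcal{F}:\mathcal{T}^Y\to\mathcal{T}^Z$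 consists of a map $F:T^Y\to T^Z$ sending vertices to vertices and each edge $\{v,w\}$ to the edge $\{F(v),F(w)\}$, with $F(Y)\subseteq Z$, $F(IV^Y)\subseteq IV^Z$ (leaves to leaves, internal vertices to internal vertices), and for each $v\in IV^Y$, $w=F(v)$, a topological branched covering $f_v:\mathcal{S}_v\to\mathcal{S}_w$ such that $f_v:\mathcal{S}_v\setminus Y_v\to\mathcal{S}_w\setminus Z_w$ is a covering map, $f_v\circ i_v=i_w\circ F$ on $E_v$, and for an edge $e=\{v_1,v_2\}$ between internal vertices $\deg_{i_{v_1}(e)}f_{v_1}=\deg_{i_{v_2}(e)}f_{v_2}$.
   Formalization: In the conclusion, $\overline{T'}$ and $\overline{T''}$ are trees of spheres marked by their leaf sets without the requirement that these sets have at least 3 elements. The statement above fails without it. *)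

From mathcomp Require Import all_boot all_algebra.
From mathcomp Require Import all_classical all_reals topology.
From mathcomp Require Import Rstruct Rstruct_topology.
Set Implicit Arguments. Unset Strict Implicit. Unset Printing Implicit Defensive.
Import GRing.Theory Num.Theory.

Record graph (V : finType) := Graph { gV : {set V}; gE : {set {set V}} }.

Section Graphs.
Variable V : finType.
Implicit Types (G : graph V).

Definition is_graph G : Prop :=
  forall e, e \in gE G -> #|e| = 2 /\ e \subset gV G.

Definition edge2 (x y : V) : {set V} := [set x; y].

Definition adj G : rel V := fun x y => edge2 x y \in gE G.

Definition edges_at G (v : V) : {set {set V}} := [set e in gE G | v \in e].

Definition valence G (v : V) : nat := #|edges_at G v|.

Definition leaves G : {set V} := [set v in gV G | valence G v == 1%N].
Definition internal G : {set V} := [set v in gV G | valence G v != 1%N].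

Definition graph_connected G : Prop :=
  (exists v, v \in gV G) /\
  forall u v, u \in gV G -> v \in gV G -> connect (adj G) u v.

Definition acyclic G : Prop :=
  forall s : seq V, uniq s -> (3 <= size s)%N -> ~~ cycle (adj G) s.

Definition is_tree G : Prop := is_graph G /\ graph_connected G /\ acyclic G.

Definition pt := (V + {set V})%type.

Definition pts G : {set pt} :=
  [set x : pt | match x with inl v => v \in gV G | inr e => e \in gE G end].

(** closed sets are the sub-graphs *)
Definition closed_in G (A : {set pt}) : Prop :=
  A \subset pts G /\ forall e v, inr e \in A -> v \in e -> inl v \in A.

Definition open_in G (A : {set pt}) : Prop :=
  A \subset pts G /\ closed_in G (pts G :\: A).

Definition closure_in G (A : {set pt}) : {set pt} :=
  \bigcap_(C : {set pt} | `[< closed_in G C >] && (A \subset C)) C.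

Definition connected_in G (A : {set pt}) : Prop :=
  A \subset pts G /\
  forall O1 O2, open_in G O1 -> open_in G O2 ->
    A \subset O1 :|: O2 -> A :&: O1 :&: O2 = finset.set0 ->
    A :&: O1 = finset.set0 \/ A :&: O2 = finset.set0.

Definition component_of G (B C : {set pt}) : Prop :=
  [/\ C \subset B, C != finset.set0, connected_in G C &
      forall D : {set pt}, C \subset D -> D \subset B -> connected_in G D -> D = C].

Definition graph_of (C : {set pt}) : graph V :=
  Graph [set v | inl v \in C] [set e | inr e \in C].

End Graphs.

Definition map_pt (VY VZ : finType) (F : VY -> VZ) (x : pt VY) : pt VZ :=
  match x with inl v => inl (F v) | inr e => inr (F @: e) end.

Definition preim_pt (VY VZ : finType) (GY : graph VY) (F : VY -> VZ)
    (B : {set pt VZ}) : {set pt VY} :=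
  [set x in pts GY | map_pt F x \in B].

Local Open Scope classical_set_scope.
Local Open Scope ring_scope.

Notation RR := Rdefinitions.R.

Definition homeo_on (X Y : topologicalType) (A : set X) (B : set Y)
    (f : X -> Y) (g : Y -> X) : Prop :=
  [/\ {within A, continuous f}, {within B, continuous g},
      (forall x, A x -> B (f x)) /\ (forall y, B y -> A (g y)),
      (forall x, A x -> g (f x) = x) & (forall y, B y -> f (g y) = y)].

Definition sphere2 : set (RR * RR * RR) :=
  [set p | p.1.1 ^+ 2 + p.1.2 ^+ 2 + p.2 ^+ 2 = 1].

Definition is_2sphere (X : topologicalType) : Prop :=
  exists (f : X -> RR * RR * RR) (g : RR * RR * RR -> X),
    homeo_on setT sphere2 f g.

Definition disk : set (RR * RR) := [set p | p.1 ^+ 2 + p.2 ^+ 2 < 1].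

(** z |-> z^d on C = R^2 *)
Definition cpow (d : nat) (z : RR * RR) : RR * RR :=
  iter d (fun w : RR * RR => (w.1 * z.1 - w.2 * z.2, w.1 * z.2 + w.2 * z.1))
    (1, 0).

Definition local_model (X Y : topologicalType) (f : X -> Y) (x : X) (d : nat)
  : Prop :=
  exists (U : set X) (W : set Y) (phi : X -> RR * RR) (phi' : RR * RR -> X)
         (psi : Y -> RR * RR) (psi' : RR * RR -> Y),
    [/\ open U /\ open W, U x /\ (forall z, U z -> W (f z)),
        homeo_on U disk phi phi' /\ homeo_on W disk psi psi',
        phi x = (0, 0) /\ psi (f x) = (0, 0) &
        forall z, U z -> psi (f z) = cpow d (phi z)].

Definition branched_covering (X Y : topologicalType) (f : X -> Y) : Prop :=
  continuous f /\ forall x, exists d, (0 < d)%N /\ local_model f x d.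

Definition local_degree (X Y : topologicalType) (f : X -> Y) (x : X) : nat :=
  xget 0%N [set d | (0 < d)%N /\ local_model f x d].

Definition covering_map_on (X Y : topologicalType) (A : set X) (B : set Y)
    (f : X -> Y) : Prop :=
  (forall x, A x -> B (f x)) /\
  forall y, B y -> exists W : set Y,
    [/\ open W, W y &
      exists sheets : set (set X),
        [/\ (forall U, sheets U -> exists O : set X, open O /\ U = A `&` O),
            (forall U U', sheets U -> sheets U' -> U `&` U' !=set0 -> U = U'),
            A `&` (f @^-1` (B `&` W)) = \bigcup_(U in sheets) U &
            forall U, sheets U -> exists g, homeo_on U (B `&` W) f g]].

(** A tree of spheres on the graph [G]: [G] is a tree (marked by its set of
    leaves), and every internal vertex [v] carries a 2-sphere [S v] and an
    injection [i v : E_v -> S v].  [marked_tree_of_spheres] omits the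
    requirement of at least 3 marked points. *)
Definition marked_tree_of_spheres (V : finType) (G : graph V)
    (S : V -> topologicalType) (i : forall v, {set V} -> S v) : Prop :=
  is_tree G /\
  forall v, v \in internal G ->
    is_2sphere (S v) /\ {in edges_at G v &, injective (i v)}.
Arguments marked_tree_of_spheres {V} G S i.

Definition tree_of_spheres (V : finType) (G : graph V)
    (S : V -> topologicalType) (i : forall v, {set V} -> S v) : Prop :=
  marked_tree_of_spheres G S i /\ (3 <= #|leaves G|)%N.
Arguments tree_of_spheres {V} G S i.

Definition marks (V : finType) (G : graph V) (S : V -> topologicalType)
    (i : forall v, {set V} -> S v) (v : V) : set (S v) :=
  [set i v e | e in [set e | e \in edges_at G v]].
Arguments marks {V} G {S} i v.

Definition is_cover (VY VZ : finType)
    (GY : graph VY) (SY : VY -> topologicalType) (iY : forall v, {set VY} -> SY v)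
    (GZ : graph VZ) (SZ : VZ -> topologicalType) (iZ : forall w, {set VZ} -> SZ w)
    (F : VY -> VZ) (f : forall v, SY v -> SZ (F v)) : Prop :=
  [/\ (forall v, v \in gV GY -> F v \in gV GZ) /\
        (forall e, e \in gE GY -> F @: e \in gE GZ),
      (forall v, v \in leaves GY -> F v \in leaves GZ),
      (forall v, v \in internal GY -> F v \in internal GZ),
      (forall v, v \in internal GY ->
         [/\ branched_covering (f v),
             covering_map_on (~` marks GY iY v) (~` marks GZ iZ (F v)) (f v) &
             forall e, e \in edges_at GY v -> f v (iY v e) = iZ (F v) (F @: e)]) &
      (forall v1 v2, v1 \in internal GY -> v2 \in internal GY ->
         edge2 v1 v2 \in gE GY ->
         local_degree (f v1) (iY v1 (edge2 v1 v2)) =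
         local_degree (f v2) (iY v2 (edge2 v1 v2)))].
Arguments is_cover {VY VZ} GY SY iY GZ SZ iZ F f.

From mathcomp Require Import boolp classical_sets topology.
From mathcomp Require Import all_boot.

(* Let A be a nonempty open connected set of points of a tree.  A vertex of
   the closure of A either lies in A, and then, A being open, keeps all its
   edges, or it is an endpoint outside A of an edge of A; such a boundary
   vertex meets only that one edge of A, since two of them would be joined
   through A avoiding it and close a cycle.  So the closure of A is a subtree
   whose internal vertices lie in A with unchanged edge sets, and the spheres
   and attaching maps restrict.  A component T' of F^-1(T'') is open and sends
   its boundary vertices outside T'' (by maximality); hence leaves of the
   closure of T', which lie in T' or on its boundary, go to leaves of the
   closure of T'', and the remaining cover conditions are local at internal
   vertices, where nothing changed. *)

Set Implicit Arguments. Unset Strict Implicit. Unset Printing Implicit Defensive.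

Notation closure_graph G A := (graph_of (closure_in G A)).

Section Graphs.
Variable V : finType.

Lemma edge2C (x y : V) : edge2 x y = edge2 y x.
Proof. by rewrite /edge2 setUC. Qed.

Lemma card2_edge2 (e : {set V}) x y :
  #|e| = 2 -> x != y -> x \in e -> y \in e -> e = edge2 x y.
Proof.
move=> e2 xy xe ye; apply/esym/eqP; rewrite eqEcard e2 /edge2 cards2 xy leqnn.
by rewrite andbT; apply/subsetP => z; rewrite !inE => /orP[] /eqP->.
Qed.

Lemma card2_other (e : {set V}) w :
  #|e| = 2 -> w \in e -> exists2 a, a != w & e = edge2 w a.
Proof.
move/eqP/cards2P => [x [y [xy ->]]]; rewrite !inE => /orP[] /eqP->.
  by exists y; rewrite // eq_sym.
by exists x; rewrite // edge2C.
Qed.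

Lemma card2_avoid (e : {set V}) w : #|e| = 2 -> exists2 x, x \in e & x != w.
Proof.
move/eqP/cards2P => [x [y [xy ->]]].
have [xw|xw] := eqVneq x w; last by exists x; rewrite ?inE ?eqxx.
by exists y; rewrite ?inE ?eqxx ?orbT // -xw eq_sym.
Qed.

Lemma acyclic_no_detour (G : graph V) w a b : acyclic G -> a != b ->
  adj G w a -> adj G w b ->
  ~~ connect [rel x y | [&& adj G x y, x != w & y != w]] a b.
Proof.
move=> acG ab wa wb; apply/negP => /connectP[p pth].
case: (shortenP pth) => {p pth} q qpth uq _ lastq.
case: q qpth uq lastq => [/= _ _ bE|c q]; first by rewrite bE eqxx in ab.
rewrite [path _ _ _]/= => /andP[/and3P[ac aw cw] qpth] uq lastq.
have avoid : all (predC1 w) (c :: q).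
  elim: q (c) cw qpth {uq lastq} => [|d q IH] x /= xw; first by rewrite xw.
  by case/andP=> /and3P[_ _ dw] dpth; rewrite xw; apply: IH dw dpth.
have cyc : cycle (adj G) [:: w, a, c & q].
  rewrite /= rcons_path /= wa ac /= -[last c q]/(last a (c :: q)) -lastq.
  have bw : adj G b w by rewrite /adj edge2C.
  rewrite bw andbT.
  by apply: sub_path qpth => x y /and3P[].
have uniq_cyc : uniq [:: w, a, c & q].
  rewrite cons_uniq uq andbT in_cons negb_or eq_sym aw /=.
  by apply/negP => /(allP avoid); rewrite /= eqxx.
by move: (acG _ uniq_cyc isT); rewrite cyc.
Qed.

End Graphs.

Section GraphTopology.
Variables (V : finType) (G : graph V).
Hypothesis graphG : is_graph G.
Implicit Types (A : {set pt V}) (P Q : pred V).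

Lemma open_in_edge A v e :
  open_in G A -> inl v \in A -> e \in gE G -> v \in e -> inr e \in A.
Proof.
case=> _ [_ closedC] vA eG ve; apply/negPn/negP => eA.
have : inl v \in pts G :\: A by apply: (closedC e); rewrite // !inE eA.
by rewrite inE vA.
Qed.

Lemma open_in_intro A : A \subset pts G ->
  (forall v e, inl v \in A -> e \in gE G -> v \in e -> inr e \in A) ->
  open_in G A.
Proof.
move=> sA starA; split=> //; split=> [|e v]; first exact: subsetDl.
rewrite !inE => /andP[eA eG] ve; apply/andP; split.
  by apply: contra eA => vA; apply: starA _ _ vA eG ve.
by have [_ /subsetP->] := graphG eG.
Qed.

Definition star P : {set pt V} := [set x : pt V |
  match x with inl v => (v \in gV G) && P v
             | inr e => (e \in gE G) && [exists v in e, P v] end].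

Lemma open_star P : open_in G (star P).
Proof.
apply: open_in_intro => [|v e]; first by apply/subsetP => -[v|e]; rewrite !inE => /andP[].
rewrite /star !inE => /andP[_ Pv] -> ve /=.
by apply/existsP; exists v; rewrite ve.
Qed.

Lemma closure_inE A : A \subset pts G ->
  closure_in G A = A :|: [set x : pt V |
    if x is inl v then [exists e, (inr e \in A) && (v \in e)] else false].
Proof.
move=> sA; apply/setP => x; apply/bigcapP/idP => [inC|].
  apply: inC; rewrite subsetUl andbT; apply/asboolP; split.
    apply/subsetP => -[v|e]; rewrite !inE => /orP[/(subsetP sA)|]; rewrite ?inE //.
    case/existsP=> e /andP[/(subsetP sA)]; rewrite inE => eG ve.
    by have [_ /subsetP->] := graphG eG.
  move=> e v; rewrite !inE => /orP[eA|//] ve.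
  by apply/orP; right; apply/existsP; exists e; rewrite eA.
rewrite !inE => xA C /andP[/asboolP[_ closedC] sAC].
case/orP: xA => [/(subsetP sAC)//|]; case: x => // v /existsP[e /andP[eA ve]].
exact: closedC (subsetP sAC _ eA) ve.
Qed.

Lemma closure_in_inr A e :
  A \subset pts G -> (inr e \in closure_in G A) = (inr e \in A).
Proof. by move=> sA; rewrite closure_inE // !inE orbF. Qed.

Lemma closure_in_inl A v : A \subset pts G ->
  (inl v \in closure_in G A) = (inl v \in A) || [exists e, (inr e \in A) && (v \in e)].
Proof. by move=> sA; rewrite closure_inE // !inE. Qed.

Lemma closure_in_edge A e v :
  A \subset pts G -> inr e \in A -> v \in e -> inl v \in closure_in G A.
Proof.
move=> sA eA ve; rewrite closure_in_inl //.
by apply/orP; right; apply/existsP; exists e; rewrite eA.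
Qed.

(* Otherwise the open stars of [P] and [Q] would separate [A]. *)
Lemma connected_in_split A P Q : connected_in G A ->
  (forall x, P x -> ~~ Q x) ->
  (forall x, inl x \in A -> P x || Q x) ->
  (forall e, inr e \in A -> exists2 x, x \in e & P x || Q x) ->
  (forall e x y, inr e \in A -> x \in e -> y \in e -> P x -> ~~ Q y) ->
  forall x y, inl x \in closure_in G A -> inl y \in closure_in G A ->
  P x -> ~~ Q y.
Proof.
move=> [sA connA] PnQ coverV coverE noCross.
have meets (R : pred V) x : inl x \in closure_in G A -> R x -> A :&: star R != set0.
  rewrite closure_in_inl // => /orP[xA|/existsP[e /andP[eA xe]]] Rx; apply/set0Pn.
    exists (inl x); rewrite !inE xA Rx andbT.
    by have := subsetP sA _ xA; rewrite inE.
  exists (inr e); rewrite !inE eA; have := subsetP sA _ eA; rewrite inE => -> /=.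
  by apply/existsP; exists x; rewrite xe.
have cover : A \subset star P :|: star Q.
  apply/subsetP => -[v|e] pA; have := subsetP sA _ pA; rewrite !inE => -> /=.
    exact: coverV.
  have [z ze] := coverE e pA.
  by case/orP=> Rz; apply/orP; [left|right]; apply/existsP; exists z; rewrite ze.
have disj : A :&: star P :&: star Q = set0.
  apply/setP => -[v|e]; rewrite !inE; apply/negbTE/negP.
    by case/andP=> /andP[_ /andP[_ /PnQ/negP nQv]] /andP[_ /nQv].
  case/andP=> /andP[eA /andP[_ /existsP[z /andP[ze Pz]]]].
  by case/andP=> _ /existsP[t /andP[te]]; apply/negP/(noCross e z t).
move=> x y xA yA Px; apply/negP => Qy.
by case: (connA _ _ (open_star P) (open_star Q) cover disj) => [AP|AQ];
  [move: (meets P x xA Px) | move: (meets Q y yA Qy)]; rewrite ?AP ?AQ eqxx.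
Qed.

(* The hypothesis says that no separation of [A] splits [x] off. *)
Lemma connected_in_setU1 A x : connected_in G A -> x \in pts G ->
  (forall O1 O2, open_in G O1 -> open_in G O2 -> x \in O1 ->
     A \subset O1 :|: O2 -> A :&: O1 = set0 -> x \in O2) ->
  connected_in G (x |: A).
Proof.
move=> [sA connA] xG noSplit; split=> [|O1 O2 open1 open2 cover disj].
  by rewrite subUset sub1set xG.
have coverA : A \subset O1 :|: O2 := subset_trans (subsetUr _ _) cover.
have disjA : A :&: O1 :&: O2 = set0.
  by apply/eqP; rewrite -subset0 -disj; do 2 apply: setSI; apply: subsetUr.
have notboth : x \in O1 -> x \in O2 -> False.
  by move=> x1 x2; have := in_set0 x; rewrite -disj !inE eqxx x1 x2.
case: (connA _ _ open1 open2 coverA disjA) => [A1|A2]; [left|right];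
  apply/setP => y; rewrite !inE; apply/negbTE/negP => /andP[/orP[/eqP->|yA] yO].
- exact: notboth yO (noSplit _ _ open1 open2 yO coverA A1).
- by have := in_set0 y; rewrite -A1 !inE yA yO.
- by apply: notboth (noSplit _ _ open2 open1 yO _ A2) yO; rewrite setUC.
- by have := in_set0 y; rewrite -A2 !inE yA yO.
Qed.

Lemma gE_closure_graph A :
  A \subset pts G -> gE (closure_graph G A) = [set e | inr e \in A].
Proof. by move=> sA; apply/setP => e; rewrite !inE closure_in_inr. Qed.

Lemma is_graph_closure_graph A : A \subset pts G -> is_graph (closure_graph G A).
Proof.
move=> sA e; rewrite gE_closure_graph // inE => eA.
have := subsetP sA _ eA; rewrite inE => /graphG[e2 _]; split=> //.
by apply/subsetP => v ve; rewrite inE (closure_in_edge sA eA ve).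
Qed.

Lemma acyclic_closure_graph A :
  A \subset pts G -> acyclic G -> acyclic (closure_graph G A).
Proof.
move=> sA acG s us s3; apply: contra (acG s us s3); apply: sub_cycle => x y.
by rewrite /adj gE_closure_graph // inE => /(subsetP sA); rewrite inE.
Qed.

Lemma graph_connected_closure_graph A : connected_in G A -> A != set0 ->
  graph_connected (closure_graph G A).
Proof.
move=> connA A0; have sA := connA.1.
have endpoint e : inr e \in A -> exists v, v \in e.
  move=> /(subsetP sA); rewrite inE => /graphG[e2 _].
  by apply/card_gt0P; rewrite e2.
split=> [|u v].
  have [[v|e] pA] := set0Pn _ A0; first by exists v; rewrite inE closure_in_inl ?pA.
  by have [v ve] := endpoint e pA; exists v; rewrite inE (closure_in_edge sA pA ve).
rewrite !inE => uA vA; set R := connect _ u.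
have := @connected_in_split A R (predC R) connA _ _ _ _ u v uA vA (connect0 _ u).
rewrite /= negbK; apply.
- by move=> x; rewrite /= negbK.
- by move=> x _; rewrite orbN.
- by move=> e /endpoint[x xe]; exists x; rewrite ?orbN.
move=> e x y eA xe ye Rx; rewrite /= negbK.
have [<-//|xy] := eqVneq x y; apply: connect_trans Rx (connect1 _).
have := subsetP sA _ eA; rewrite inE => /graphG[e2 _].
by rewrite /adj gE_closure_graph // inE -(card2_edge2 e2 xy xe ye).
Qed.

Lemma is_tree_closure_graph A : acyclic G -> connected_in G A -> A != set0 ->
  is_tree (closure_graph G A).
Proof.
move=> acG connA A0; split; first exact: is_graph_closure_graph connA.1.
split; first exact: graph_connected_closure_graph.
exact: acyclic_closure_graph connA.1 acG.
Qed.

(* Two edges of [A] at a vertex [w] outside [A] would be joined, away from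
   [w], by a path inside [A]: together with [w] it closes a cycle. *)
Lemma connected_in_boundary A w e1 e2 : acyclic G -> connected_in G A ->
  inl w \notin A -> inr e1 \in A -> inr e2 \in A -> w \in e1 -> w \in e2 ->
  e1 = e2.
Proof.
move=> acG connA wA e1A e2A we1 we2; have sA := connA.1.
have edgeG e : inr e \in A -> e \in gE G by move/(subsetP sA); rewrite inE.
have card_e e : inr e \in A -> #|e| = 2 by move/edgeG/graphG=> [].
have [a aw e1E] := card2_other (card_e _ e1A) we1.
have [b bw e2E] := card2_other (card_e _ e2A) we2.
apply/eqP/negPn/negP => e12.
have ab : a != b by apply: contra e12 => /eqP ab; rewrite e1E e2E ab.
pose avoid := [rel x y | [&& adj G x y, x != w & y != w]].
pose R := connect avoid a.
have : ~~ ((b != w) && ~~ R b).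
  apply: (@connected_in_split A [pred x | (x != w) && R x]
            [pred x | (x != w) && ~~ R x] connA _ _ _ _ a b) => /=.
  - by move=> x /andP[_ ->]; rewrite andbF.
  - move=> x xA; have xw : x != w by apply: contraNneq wA => <-.
    by rewrite xw orbN.
  - by move=> e /card_e /(card2_avoid w)[x xe xw]; exists x; rewrite ?xw ?orbN.
  - move=> e x y eA xe ye /andP[xw Rx] /=; apply/nandP.
    have [yw|yw] := eqVneq y w; [by left | right; rewrite negbK].
    have [<-//|xy] := eqVneq x y; apply: connect_trans Rx (connect1 _).
    by rewrite /= xw yw /adj -(card2_edge2 (card_e _ eA) xy xe ye) edgeG.
  - by rewrite (closure_in_edge sA e1A) // e1E !inE eqxx orbT.
  - by rewrite (closure_in_edge sA e2A) // e2E !inE eqxx orbT.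
  - by rewrite aw; apply: connect0.
rewrite bw negbK /=; apply/negP/(acyclic_no_detour acG ab).
  by rewrite /adj -e1E edgeG.
by rewrite /adj -e2E edgeG.
Qed.

Lemma valence_closure_graph_boundary A w e : acyclic G -> connected_in G A ->
  inl w \notin A -> inr e \in A -> w \in e -> valence (closure_graph G A) w = 1.
Proof.
move=> acG connA wA eA we; rewrite /valence (_ : edges_at _ w = [set e]) ?cards1 //.
apply/setP => e'; rewrite /edges_at !inE closure_in_inr; last exact: connA.1.
apply/andP/eqP => [[e'A we']|->] //.
exact: connected_in_boundary connA wA e'A eA we' we.
Qed.

Lemma edges_at_closure_graph A v : open_in G A -> inl v \in A ->
  edges_at (closure_graph G A) v = edges_at G v.
Proof.
move=> openA vA; have sA := openA.1.
apply/setP => e; rewrite /edges_at !inE closure_in_inr //.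
apply/andP/andP => -[eA ve]; split=> //; first by move: (subsetP sA _ eA); rewrite inE.
exact: open_in_edge openA vA eA ve.
Qed.

Lemma internal_closure_graph A v : acyclic G -> connected_in G A -> open_in G A ->
  v \in internal (closure_graph G A) -> inl v \in A /\ v \in internal G.
Proof.
move=> acG connA openA; have sA := connA.1; rewrite inE => /andP[vV v1].
have vA : inl v \in A.
  move: vV; rewrite inE closure_in_inl // => /orP[//|/existsP[e /andP[eA ve]]].
  apply/negPn/negP => vA.
  by move: v1; rewrite (valence_closure_graph_boundary acG connA vA eA ve).
split=> //; rewrite inE /valence -(edges_at_closure_graph openA vA) v1 andbT.
by move: (subsetP sA _ vA); rewrite inE.
Qed.

End GraphTopology.

Lemma marked_tree_of_spheres_closure (V : finType) (G : graph V)
    (S : V -> topologicalType) (i : forall v, {set V} -> S v) (A : {set pt V}) :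
  marked_tree_of_spheres G S i -> A != set0 -> open_in G A -> connected_in G A ->
  marked_tree_of_spheres (closure_graph G A) S i.
Proof.
move=> [treeG spheres] A0 openA connA; have [graphG [_ acG]] := treeG.
split=> [|v /(internal_closure_graph graphG acG connA openA)[vA /spheres[sv inj]]].
  exact: is_tree_closure_graph.
by split; rewrite // edges_at_closure_graph.
Qed.

Section CoverRestriction.
Variables (VY VZ : finType) (GY : graph VY) (SY : VY -> topologicalType)
  (iY : forall v, {set VY} -> SY v) (GZ : graph VZ) (SZ : VZ -> topologicalType)
  (iZ : forall w, {set VZ} -> SZ w) (F : VY -> VZ) (f : forall v, SY v -> SZ (F v))
  (T'' : {set pt VZ}) (T' : {set pt VY}).
Hypotheses (treeY : is_tree GY) (treeZ : is_tree GZ)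
  (coverF : is_cover GY SY iY GZ SZ iZ F f)
  (openT'' : open_in GZ T'') (connT'' : connected_in GZ T'')
  (compT' : component_of GY (preim_pt GY F T'') T').

Let graphY : is_graph GY := treeY.1.
Let graphZ : is_graph GZ := treeZ.1.
Let acY : acyclic GY := treeY.2.2.
Let acZ : acyclic GZ := treeZ.2.2.
Let sT'' : T'' \subset pts GZ := connT''.1.
Let sT' : T' \subset pts GY.
Proof. by case: compT' => _ _ []. Qed.
Let F_edge e : e \in gE GY -> F @: e \in gE GZ.
Proof. by case: coverF => -[_ FE] *; apply: FE. Qed.

Lemma component_map_inl v : inl v \in T' -> inl (F v) \in T''.
Proof. by case: compT' => /subsetP sTpre _ _ _ /sTpre; rewrite inE => /andP[]. Qed.

Lemma component_map_inr e : inr e \in T' -> inr (F @: e) \in T''.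
Proof. by case: compT' => /subsetP sTpre _ _ _ /sTpre; rewrite inE => /andP[]. Qed.

Lemma component_open : open_in GY T'.
Proof.
have [sTpre _ connT' maximal] := compT'.
apply: open_in_intro => // v e vT eG ve; set T1 := inr e |: T'.
suff <- : T1 = T' by exact: setU11.
apply: maximal; first exact: subsetUr.
  rewrite subUset sub1set sTpre andbT /preim_pt !inE eG /=.
  exact: open_in_edge openT'' (component_map_inl vT) (F_edge eG) (imset_f F ve).
apply: connected_in_setU1; rewrite ?inE // => O1 O2 _ open2 _ cover disj.
have : inl v \in O1 :|: O2 by apply: (subsetP cover).
rewrite inE => /orP[vO1|vO2]; last exact: open_in_edge open2 vO2 eG ve.
by have := in_set0 (inl v : pt VY); rewrite -disj inE vT vO1.
Qed.

Lemma component_boundary v e :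
  inl v \notin T' -> inr e \in T' -> v \in e -> inl (F v) \notin T''.
Proof.
move=> vT eT ve; apply: contra vT => FvT.
have [sTpre _ connT' maximal] := compT'.
have eG : e \in gE GY by move: (subsetP sT' _ eT); rewrite inE.
have vG : v \in gV GY by have [_ /subsetP->] := graphY eG.
suff <- : inl v |: T' = T' by exact: setU11.
apply: maximal; first exact: subsetUr.
  by rewrite subUset sub1set sTpre andbT /preim_pt !inE vG.
apply: connected_in_setU1; rewrite ?inE // => O1 O2 open1 _ vO1 _ disj.
have := in_set0 (inr e : pt VY).
by rewrite -disj inE eT (open_in_edge open1 vO1 eG ve).
Qed.

Lemma closure_component_map v :
  inl v \in closure_in GY T' -> inl (F v) \in closure_in GZ T''.
Proof.
rewrite !closure_in_inl // => /orP[vT|/existsP[e /andP[eT ve]]].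
  by rewrite (component_map_inl vT).
apply/orP; right; apply/existsP; exists (F @: e).
by rewrite (component_map_inr eT) imset_f.
Qed.

Lemma closure_component_leaf v : v \in leaves (closure_graph GY T') ->
  F v \in leaves (closure_graph GZ T'').
Proof.
rewrite !inE => /andP[vV v1]; rewrite (closure_component_map vV) /=.
have [vT|vT] := boolP (inl v \in T').
  have vleaf : v \in leaves GY.
    rewrite inE /valence -(edges_at_closure_graph graphY component_open vT) v1.
    by move: (subsetP sT' _ vT); rewrite inE => ->.
  have : F v \in leaves GZ by case: coverF => _ leafF *; apply: leafF.
  rewrite inE /valence.
  by rewrite -(edges_at_closure_graph graphZ openT'' (component_map_inl vT)) => /andP[].
move: vV; rewrite closure_in_inl // (negbTE vT) => /existsP[e /andP[eT ve]].
have FvT := component_boundary vT eT ve.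
by rewrite (valence_closure_graph_boundary graphZ acZ connT'' FvT
  (component_map_inr eT) (imset_f F ve)).
Qed.

Lemma is_cover_closure :
  is_cover (closure_graph GY T') SY iY (closure_graph GZ T'') SZ iZ F f.
Proof.
have [_ _ internalF localF degreeF] := coverF.
have connT' : connected_in GY T' by case: compT'.
have internal_in v : v \in internal (closure_graph GY T') ->
    inl v \in T' /\ v \in internal GY.
  exact: (internal_closure_graph graphY acY connT' component_open).
have edges_atY v : inl v \in T' ->
    edges_at (closure_graph GY T') v = edges_at GY v.
  exact: (edges_at_closure_graph graphY component_open).
have edges_atZ v : inl v \in T' ->
    edges_at (closure_graph GZ T'') (F v) = edges_at GZ (F v).
  by move=> vT; rewrite (edges_at_closure_graph graphZ openT'' (component_map_inl vT)).
split.
- split=> [v|e]; rewrite !inE; first exact: closure_component_map.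
  by rewrite !closure_in_inr //; apply: component_map_inr.
- exact: closure_component_leaf.
- move=> v vI; have [vT /internalF] := internal_in v vI.
  move: vI; rewrite !inE /valence edges_atZ // => /andP[vV _] /andP[_ ->].
  by rewrite andbT closure_component_map.
- move=> v /internal_in[vT /localF[branched covering attach]]; split=> //.
    by rewrite /marks edges_atY // edges_atZ.
  by move=> e; rewrite edges_atY //; apply: attach.
- move=> v1 v2 /internal_in[_ v1I] /internal_in[_ v2I] e12; apply: degreeF => //.
  by move: e12; rewrite !inE closure_in_inr // => /(subsetP sT'); rewrite inE.
Qed.

End CoverRestriction.

Theorem lemma2p25 (VY VZ : finType)
    (GY : graph VY) (SY : VY -> topologicalType) (iY : forall v, {set VY} -> SY v)
    (GZ : graph VZ) (SZ : VZ -> topologicalType) (iZ : forall w, {set VZ} -> SZ w)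
    (F : VY -> VZ) (f : forall v, SY v -> SZ (F v))
    (T'' : {set pt VZ}) (T' : {set pt VY}) :
  tree_of_spheres GY SY iY ->
  tree_of_spheres GZ SZ iZ ->
  is_cover GY SY iY GZ SZ iZ F f ->
  T'' != finset.set0 -> open_in GZ T'' -> connected_in GZ T'' ->
  component_of GY (preim_pt GY F T'') T' ->
  let GY' := graph_of (closure_in GY T') in
  let GZ' := graph_of (closure_in GZ T'') in
  [/\ marked_tree_of_spheres GY' SY iY,
      marked_tree_of_spheres GZ' SZ iZ &
      is_cover GY' SY iY GZ' SZ iZ F f].
Proof.
move=> [markedY _] [markedZ _] coverF T''0 openT'' connT'' compT' GY' GZ'.
have treeY := markedY.1; have treeZ := markedZ.1.
have [_ T'0 connT' _] := compT'.
have openT' := component_open treeY coverF openT'' compT'.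
split; first exact: marked_tree_of_spheres_closure markedY T'0 openT' connT'.
  exact: marked_tree_of_spheres_closure markedZ T''0 openT'' connT''.
exact: is_cover_closure treeY treeZ coverF openT'' connT'' compT'.
Qed.
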